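(* If $Q$ is a Jordan loop and $x\in Q$, then $(x^{2^n})^{-1}=(x^{-1})^{2^n}$ for every integer $n\ge 0$.
   Context: A loop is a set $Q$ with a binary operation (juxtaposition) and neutral element $e$ such that for all $a,b$ the equations $ax=b$, $ya=b$ have unique solutions. A Jordan loop is a commutative loop satisfying $x^2(yx)=(x^2y)x$. For $y\in Q$ and $k\ge 0$, $y^k$ denotes the right-associated product $y(y(\cdots(ye)\cdots))$ with $k$ factors $y$. Since the loop is commutative, each $x$ has a unique inverse $x^{-1}$ with $xx^{-1}=x^{-1}x=e$. *)

From Stdlib Require Import ClassicalEpsilon.

Record loop := Loop {
  carrier :> Type;
  lop : carrier -> carrier -> carrier;
  le : carrier;
  lop_e_l : forall x, lop le x = x;
  lop_e_r : forall x, lop x le = x;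
  ldiv_unique : forall a b : carrier, exists! x, lop a x = b;
  rdiv_unique : forall a b : carrier, exists! y, lop y a = b
}.

Definition jordan_loop (Q : loop) : Prop :=
  (forall x y : Q, lop Q x y = lop Q y x) /\
  (forall x y : Q,
     lop Q (lop Q x x) (lop Q y x) = lop Q (lop Q (lop Q x x) y) x).

Fixpoint lpow (Q : loop) (k : nat) (y : Q) : Q :=
  match k with
  | O => le Q
  | S k' => lop Q y (lpow Q k' y)
  end.

Lemma ex_of_uniq {A} (P : A -> Prop) : (exists! x, P x) -> exists x, P x.
Proof. intros [x [H _]]; exists x; exact H. Qed.

(* x^{-1}: the unique solution of x z = e (two-sided in a commutative loop). *)
Definition linv (Q : loop) (x : Q) : Q :=
  proj1_sig (constructive_indefinite_description _
    (ex_of_uniq _ (ldiv_unique Q x (le Q)))).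

Lemma linv_spec (Q : loop) (x : Q) : lop Q x (linv Q x) = le Q.
Proof. unfold linv. destruct constructive_indefinite_description; auto. Qed.

(* In a Jordan loop, [a b = e] forces [a^2 b = a] (cancel [a] on the right of
   the Jordan identity), and applying this twice shows that the inverse of
   [a^2] is [(a^-1)^2].  The Jordan identity also lets [a^2] commute past a
   factor [a], so [(a^2)^j = a^(2j)]; induction on [n] then squares both sides
   of the claim. *)
From Stdlib Require Import Lia PeanoNat.

Section LoopCancellation.
Variable Q : loop.
Notation "a * b" := (lop Q a b).

Lemma lop_rcancel (a y1 y2 : Q) : y1 * a = y2 * a -> y1 = y2.
Proof.
  intros Heq. destruct (rdiv_unique Q a (y1 * a)) as [y [_ Huniq]].
  rewrite <- (Huniq y1 eq_refl). apply Huniq. now symmetry.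
Qed.

Lemma linv_unique (a z : Q) : a * z = le Q -> z = linv Q a.
Proof.
  intros Haz. destruct (ldiv_unique Q a (le Q)) as [y [_ Huniq]].
  rewrite <- (Huniq z Haz). apply Huniq. apply linv_spec.
Qed.

End LoopCancellation.

Section JordanLoop.
Variable Q : loop.
Hypothesis HJ : jordan_loop Q.
Notation "a * b" := (lop Q a b).

Lemma lopC (a b : Q) : a * b = b * a.
Proof. exact (proj1 HJ a b). Qed.

Lemma jordan_id (a y : Q) : (a * a) * (y * a) = ((a * a) * y) * a.
Proof. exact (proj2 HJ a y). Qed.

Lemma sq_mul_of_mul_e (a b : Q) : a * b = le Q -> (a * a) * b = a.
Proof.
  intros Hab. apply (lop_rcancel Q a). rewrite <- jordan_id.
  now rewrite (lopC b a), Hab, lop_e_r.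
Qed.

Lemma linv_sq (a : Q) : linv Q (a * a) = linv Q a * linv Q a.
Proof.
  set (u := linv Q a).
  assert (Hau : a * u = le Q) by apply linv_spec.
  assert (Hua : u * a = le Q) by now rewrite lopC.
  symmetry. apply linv_unique. rewrite lopC.
  apply (lop_rcancel Q u). rewrite lop_e_l, <- jordan_id.
  rewrite (sq_mul_of_mul_e a u Hau). exact (sq_mul_of_mul_e u a Hua).
Qed.

Lemma sq_mul_mulC (a y : Q) : (a * a) * (a * y) = a * ((a * a) * y).
Proof. rewrite (lopC a y), jordan_id. apply lopC. Qed.

Lemma sq_mul_lpow (a : Q) (j : nat) : (a * a) * lpow Q j a = lpow Q (S (S j)) a.
Proof.
  induction j as [|j IH]; simpl.
  - now rewrite !lop_e_r.
  - rewrite sq_mul_mulC. simpl in IH. now rewrite IH.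
Qed.

Lemma lpow_sq (a : Q) (j : nat) : lpow Q j (a * a) = lpow Q (Nat.mul 2 j) a.
Proof.
  induction j as [|j IH]; [reflexivity|].
  replace (Nat.mul 2 (S j)) with (S (S (Nat.mul 2 j))) by lia.
  simpl lpow at 1. now rewrite IH, sq_mul_lpow.
Qed.

End JordanLoop.

Theorem lemma2p6 (Q : loop) (HJ : jordan_loop Q) (x : Q) (n : nat) :
  linv Q (lpow Q (Nat.pow 2 n) x) = lpow Q (Nat.pow 2 n) (linv Q x).
Proof.
  revert x; induction n as [|n IH]; intros x.
  - simpl. now rewrite !lop_e_r.
  - rewrite Nat.pow_succ_r', <- !(lpow_sq Q HJ).
    now rewrite IH, (linv_sq Q HJ).
Qed.
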